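(* Let $G$ be a group generated by a finite conjugacy class $X$, let $m$ be the order of the conjugation action of any $x\in X$ on $X$, let $<$ be a total order on $X$, and let $z$ be the maximal element of $(X,<)$. Then for all $n\ge 0$, every element of $X^n=\{y_1y_2\cdots y_n: y_i\in X\}\subseteq G$ can be written as $x_1^{n_1}x_2^{n_2}\cdots x_k^{n_k}z^l$ with $k,l\ge0$, $n_1+\cdots+n_k+l=n$, $x_1<x_2<\cdots<x_k<z$ in $X$, and $1\le n_i\le m-1$ for all $1\le i\le k$.
   Context: The conjugation action of $x\in X$ on $X$ is the permutation $y\mapsto xyx^{-1}$ of $X$; its order $m$ is the same for all $x\in X$ since $X$ is a conjugacy class. *)

From mathcomp Require Import all_boot.
Set Implicit Arguments. Unset Strict Implicit. Unset Printing Implicit Defensive.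
Local Open Scope group_scope.

(* X (given as a duplicate-free list) is a conjugacy class of G:
   X = { x0 ^ g | g in G } for some x0 (x ^ g = g^-1 * x * g). *)
Definition is_conj_class (G : groupType) (X : seq G) : Prop :=
  exists x0 : G, forall y : G, y \in X <-> exists g : G, y = x0 ^ g.

Definition generates (G : groupType) (X : seq G) : Prop :=
  forall S : {pred G}, group_closed S -> {subset X <= S} -> forall g : G, g \in S.

Definition conj_iter (G : groupType) (x : G) (k : nat) (y : G) : G :=
  x ^+ k * y * (x ^+ k)^-1.

Definition conj_action_order (G : groupType) (X : seq G) (x : G) (m : nat) : Prop :=
  [/\ 0 < m,
      (forall y, y \in X -> conj_iter x m y = y) &
      (forall k, 0 < k < m -> exists2 y, y \in X & conj_iter x k y != y)].

Definition strict_total_order_on (G : eqType) (X : seq G) (lt : rel G) : Prop :=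
  [/\ (forall x, x \in X -> ~~ lt x x),
      (forall x y z, x \in X -> y \in X -> z \in X -> lt x y -> lt y z -> lt x z) &
      (forall x y, x \in X -> y \in X -> x != y -> lt x y || lt y x)].

Definition prodl (G : groupType) (s : seq G) : G := foldr (fun a b => a * b) 1 s.

Definition prod_pows (G : groupType) (xs : seq G) (ns : seq nat) : G :=
  prodl [seq p.1 ^+ p.2 | p <- zip xs ns].

From mathcomp Require Import all_boot.
From mathcomp Require Import zify.
Set Implicit Arguments. Unset Strict Implicit. Unset Printing Implicit Defensive.
Local Open Scope group_scope.

(* The proof has two stages.
   1. Sorting.  Since X is closed under conjugation, y s = s (y ^ s) for
      s, y in X, so a product of n letters of X can be rewritten as a
      weakly increasing product of n letters of X.  Inserting a letter y
      into a sorted word terminates by induction on the rank of y (the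
      number of letters of X below it): when y is moved past a smaller s,
      it is s, of smaller rank, that remains to be inserted.
   2. Collecting.  x ^+ m commutes with every generator y (conjugation by
      x has order m on X), hence is central; and all x ^+ m (x in X) are
      conjugate, hence equal to z ^+ m.  Reading a sorted word from the
      right, runs of equal letters are collected into powers, and a power
      x ^+ m is traded for the central z ^+ m and moved to the right. *)

Section TotalOrderOn.

Variables (T : eqType) (X : seq T) (lt : rel T).
Hypothesis lt_order : strict_total_order_on X lt.

Definition le : rel T := fun a b => (a == b) || lt a b.

Lemma lt_irr x : x \in X -> ~~ lt x x.
Proof. by case: lt_order => irr _ _; apply: irr. Qed.

Lemma lt_le_trans a b c : a \in X -> b \in X -> c \in X ->
  lt a b -> le b c -> lt a c.
Proof.
case: lt_order => _ tr _ aX bX cX ab /orP[/eqP <- // | bc].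
exact: (tr a b c).
Qed.

Lemma le_trans a b c : a \in X -> b \in X -> c \in X ->
  le a b -> le b c -> le a c.
Proof.
move=> aX bX cX /orP[/eqP -> // | ab] bc.
by rewrite /le (lt_le_trans aX bX cX ab bc) orbT.
Qed.

Lemma le_or_gt a b : a \in X -> b \in X -> le a b || lt b a.
Proof.
case: lt_order => _ _ tot aX bX; rewrite /le.
by case: (eqVneq a b) => //= ab; apply: tot.
Qed.

Lemma sorted_le_head y s : all (mem X) (y :: s) -> path le y s -> all (le y) s.
Proof.
elim: s y => [|a s IH] y //= /and3P[yX aX sX] /andP[ya as_sorted].
have /allP a_le := IH a (introT andP (conj aX sX)) as_sorted.
rewrite ya /=; apply/allP => b bs.
exact: le_trans yX aX (allP sX b bs) ya (a_le b bs).
Qed.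

Definition rank (y : T) : nat := count (fun x => lt x y) X.

Lemma rank_lt s y : s \in X -> y \in X -> lt s y -> (rank s < rank y)%N.
Proof.
case: lt_order => irr tr _ sX yX sy.
rewrite /rank -(size_filter (fun x => lt x y)) -(count_predC (fun x => lt x s)).
rewrite !count_filter.
have -> : count (predI (fun x => lt x s) (fun x => lt x y)) X = rank s.
  apply: eq_in_count => x xX /=.
  by case xs: (lt x s) => //=; apply: (tr x s y).
rewrite -[X in (X < _)%N]addn0 ltn_add2l lt0n -lt0n -has_count.
by apply/hasP; exists s => //=; rewrite irr.
Qed.

End TotalOrderOn.

Lemma conj_class_conj (G : groupType) (X : seq G) :
  is_conj_class X -> forall y s, y \in X -> y ^ s \in X.
Proof.
by move=> [x0 clX] y s /clX [g ->]; apply/clX; exists (g * s); rewrite conjgM.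
Qed.

Section Sorting.

Variables (G : groupType) (X : seq G) (lt : rel G).
Hypotheses (X_class : is_conj_class X) (lt_order : strict_total_order_on X lt).

Definition sorted_product (n : nat) (g : G) : Prop :=
  exists2 ts : seq G, [/\ size ts = n, all (mem X) ts & sorted (le lt) ts]
    & prodl ts = g.

Lemma insert_sorted n :
  (forall ys, size ys = n -> all (mem X) ys -> sorted_product n (prodl ys)) ->
  forall y t, y \in X -> size t = n -> all (mem X) t -> sorted (le lt) t ->
  sorted_product n.+1 (y * prodl t).
Proof.
move=> sort_n y t yX; have [k] := ubnP (rank X lt y).
elim: k y t yX => // k IHk y [|s t] yX rank_y.
  by move=> <- _ _; exists [:: y]; rewrite /= ?yX.
move=> size_st /= /andP[sX tX] s_t_sorted.
have [y_le_s | s_lt_y] := orP (le_or_gt lt_order yX sX).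
  by exists [:: y, s & t]; rewrite // -size_st /= yX sX tX y_le_s.
(* y s t = s (y ^ s) t: sort (y ^ s) t, then insert s, of smaller rank. *)
have ysX : y ^ s \in X by exact: conj_class_conj.
have [w [size_w wX w_sorted] prod_w] : sorted_product n (prodl (y ^ s :: t)).
  by apply: sort_n; rewrite /= ?ysX.
have rank_s : (rank X lt s < k)%N.
  by apply: leq_trans (rank_lt lt_order sX yX s_lt_y) _; rewrite -ltnS.
have [u u_sorted prod_u] := IHk s w sX rank_s size_w wX w_sorted.
by exists u => //; rewrite prod_u prod_w /= mulgA -conjgC -mulgA.
Qed.

Lemma sort_word n ys : size ys = n -> all (mem X) ys -> sorted_product n (prodl ys).
Proof.
elim: n ys => [|n IH] [|y ys] //= => [_ _|[size_ys] /andP[yX ysX]].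
  by exists [::].
have [t [size_t tX t_sorted] <-] := IH ys size_ys ysX.
exact: insert_sorted.
Qed.

End Sorting.

Section CentralPower.

Variables (G : groupType) (X : seq G) (m : nat).
Hypotheses (X_class : is_conj_class X) (X_gen : generates X).
Hypothesis conj_order : forall x, x \in X -> conj_action_order X x m.

(* Conjugation by x ^+ m fixes every generator, so x ^+ m is central. *)
Lemma pow_order_central x : x \in X -> forall g : G, commute g (x ^+ m).
Proof.
move=> xX; set c := x ^+ m.
have c_fixes : forall y, y \in X -> commute y c.
  move=> y yX; case: (conj_order xX) => _ fix_y _.
  by rewrite /commute -{1}(fix_y y yX) /conj_iter -/c mulgVK.
pose C : {pred G} := [pred g | g * c == c * g].
have C_group : group_closed C.
  split=> [|u v]; first by rewrite inE mul1g mulg1.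
  rewrite !inE => /eqP cu /eqP cv; apply/eqP.
  exact: commute_sym (commuteM (commute_sym cu) (commuteV (commute_sym cv))).
have X_in_C : {subset X <= C} by move=> y /c_fixes /eqP.
by move=> g; apply/eqP: (X_gen C_group X_in_C g).
Qed.

(* The m-th powers of the letters are conjugate and central, hence equal. *)
Lemma pow_order_eq x y : x \in X -> y \in X -> x ^+ m = y ^+ m.
Proof.
case: X_class => x0 clX xX yX.
have [a ->] := (clX x).1 xX; have [b ->] := (clX y).1 yX.
have x0X : x0 \in X by apply/clX; exists 1; rewrite conjg1.
rewrite -!conjXg !conjgE.
by rewrite -!(pow_order_central x0X) !mulKg.
Qed.

End CentralPower.

Lemma prod_pows_nil (G : groupType) : prod_pows [::] [::] = 1 :> G.
Proof. by []. Qed.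

Lemma prod_pows_cons (G : groupType) (x : G) xs n ns :
  prod_pows (x :: xs) (n :: ns) = x ^+ n * prod_pows xs ns.
Proof. by []. Qed.

Section NormalForm.

Variables (G : groupType) (X : seq G) (m : nat) (lt : rel G) (z : G).
Hypotheses (lt_order : strict_total_order_on X lt) (zX : z \in X).
Hypothesis z_max : forall x, x \in X -> x != z -> lt x z.
Hypothesis m_pos : (0 < m)%N.
Hypothesis pow_central : forall x, x \in X -> forall g : G, commute g (x ^+ m).
Hypothesis pow_eq_top : forall x, x \in X -> x ^+ m = z ^+ m.

Definition normal_form (xs : seq G) (ns : seq nat) : Prop :=
  [/\ size xs = size ns, all (mem X) xs, sorted lt (rcons xs z)
    & all (fun k => (1 <= k <= m - 1)%N) ns].

Lemma le_top x : x \in X -> le lt x z.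
Proof. by move=> xX; rewrite /le; case: eqVneq => //= /(z_max xX). Qed.

Lemma head_lt_top x xs :
  all (mem X) (x :: xs) -> sorted lt (rcons (x :: xs) z) -> lt x z.
Proof.
case: xs => [|w xs] /=; first by move=> _ /andP[].
move=> /and3P[xX wX _] /andP[xw _].
by apply: (lt_le_trans lt_order xX wX zX xw); apply: le_top.
Qed.

Lemma normal_form_top xs ns : normal_form xs ns -> le lt z (head z xs) -> xs = [::].
Proof.
case: xs => [|x xs] // [_ xsX xs_sorted _] /= z_le_x.
have xX := allP xsX x (mem_head x xs).
have := lt_le_trans lt_order xX zX xX (head_lt_top xsX xs_sorted) z_le_x.
by rewrite (negbTE (lt_irr lt_order xX)).
Qed.

(* A letter other than z forces m >= 2, so that exponent 1 is allowed. *)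
Lemma one_le_exponent x : x \in X -> x != z -> (1 <= m - 1)%N.
Proof.
move=> xX; case: m m_pos pow_eq_top => [|[|m']] // _ pow_eq.
by have := pow_eq x xX; rewrite !expg1 => ->; rewrite eqxx.
Qed.

Lemma normal_form_cons y xs ns l :
  y \in X -> normal_form xs ns -> le lt y (head z xs) ->
  exists xs' ns' l',
    [/\ normal_form xs' ns', {subset xs' <= y :: xs},
        (sumn ns' + l' = (sumn ns + l).+1)%N
      & y * (prod_pows xs ns * z ^+ l) = prod_pows xs' ns' * z ^+ l'].
Proof.
move=> yX nf y_le_head; have [size_xs xsX xs_sorted ns_range] := nf.
have [y_eq_z | y_ne_z] := eqVneq y z.
  subst y; have xs_nil := normal_form_top nf y_le_head.
  have ns_nil : ns = [::] by apply/size0nil; rewrite -size_xs xs_nil.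
  exists [::], [::], l.+1; rewrite xs_nil ns_nil.
  by split=> //; rewrite !prod_pows_nil !mul1g expgS.
have y_lt_z := z_max yX y_ne_z; have one_le := one_le_exponent yX y_ne_z.
case: xs ns {nf} size_xs xsX xs_sorted ns_range y_le_head => [|x xs] [|e ns] //.
  move=> _ _ _ _ _; exists [:: y], [:: 1%N], l.
  split=> //; first by split; rewrite /= ?yX ?y_lt_z ?one_le.
  by rewrite prod_pows_cons prod_pows_nil mul1g mulg1 expg1.
move=> [size_xs] /= xsX xs_sorted /andP[e_range ns_range] y_le_x.
have [y_eq_x | y_ne_x] := eqVneq y x.
  subst x; have [e_small | e_full] := ltnP e.+1 m.
    exists (y :: xs), (e.+1 :: ns), l; split.
    - by split; rewrite /= ?size_xs // ns_range andbT; lia.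
    - by move=> w w_in; rewrite inE w_in orbT.
    - by rewrite /=; lia.
    by rewrite !prod_pows_cons expgS !mulgA.
  (* y ^+ m = z ^+ m is central: absorb it into the power of z. *)
  have e_eq : e.+1 = m by lia.
  exists xs, ns, (m + l)%N; split.
  - by split=> //; [case/andP: xsX | move: xs_sorted => /= /path_sorted].
  - by move=> w w_xs; rewrite !inE w_xs !orbT.
  - by lia.
  rewrite prod_pows_cons !mulgA -expgS e_eq pow_eq_top // expgnDr !mulgA.
  by rewrite (pow_central zX).
have y_lt_x : lt y x by case/orP: y_le_x => //; rewrite (negbTE y_ne_x).
exists [:: y, x & xs], [:: 1%N, e & ns], l; split=> //=.
  by split; rewrite /= ?size_xs ?yX ?xsX ?y_lt_x ?one_le ?e_range.
by rewrite !prod_pows_cons expg1 !mulgA.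
Qed.

Lemma normal_form_sorted ts : all (mem X) ts -> sorted (le lt) ts ->
  exists xs ns l,
    [/\ normal_form xs ns, {subset xs <= ts}, (sumn ns + l = size ts)%N
      & prodl ts = prod_pows xs ns * z ^+ l].
Proof.
elim: ts => [|y ts IH] /=.
  by move=> _ _; exists [::], [::], 0; split=> //; rewrite prod_pows_nil mul1g.
move=> y_ts_X y_ts_sorted; have /andP[yX tsX] := y_ts_X.
have [xs [ns [l [nf xs_sub size_eq ->]]]] := IH tsX (path_sorted y_ts_sorted).
(* y is below every letter of ts, in particular below the head of xs. *)
have y_le_head : le lt y (head z xs).
  case: xs {nf size_eq} xs_sub => [_ | x xs xs_sub] /=; first exact: le_top.
  have /allP := sorted_le_head lt_order y_ts_X y_ts_sorted.
  by apply; apply: xs_sub; rewrite mem_head.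
have [xs' [ns' [l' [nf' xs'_sub size' prod']]]] := normal_form_cons l yX nf y_le_head.
exists xs', ns', l'; split=> //; last by rewrite size' size_eq.
move=> w /xs'_sub; rewrite inE => /orP[/eqP -> | /xs_sub w_ts].
  exact: mem_head.
by rewrite inE w_ts orbT.
Qed.

End NormalForm.

Theorem mainTheorem2 (G : groupType) (X : seq G) (m : nat) (lt : rel G) (z : G) :
  uniq X ->
  is_conj_class X ->
  generates X ->
  (forall x, x \in X -> conj_action_order X x m) ->
  strict_total_order_on X lt ->
  z \in X -> (forall x, x \in X -> x != z -> lt x z) ->
  forall (n : nat) (g : G),
    (exists2 ys : seq G, (size ys = n)%N /\ all (mem X) ys & g = prodl ys) ->
    exists (xs : seq G) (ns : seq nat) (l : nat),
      [/\ size xs = size ns, all (mem X) xs & sorted lt (rcons xs z)] /\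
      [/\
          all (fun k => (1 <= k <= m - 1)%N) ns,
          (sumn ns + l = n)%N &
          g = prod_pows xs ns * z ^+ l].
Proof.
move=> _ X_class X_gen conj_order lt_order zX z_max n g [ys [size_ys ysX] ->].
have m_pos : (0 < m)%N by case: (conj_order z zX).
have pow_central := pow_order_central X_gen conj_order.
have pow_eq_top x : x \in X -> x ^+ m = z ^+ m.
  by move=> xX; apply: pow_order_eq X_class X_gen conj_order x z xX zX.
have [ts [size_ts tsX ts_sorted] <-] := sort_word X_class lt_order size_ys ysX.
have [xs [ns [l [[size_ns xsX xs_sorted ns_range] _ sum_eq ->]]]] :=
  normal_form_sorted lt_order zX z_max m_pos pow_central pow_eq_top tsX ts_sorted.
by exists xs, ns, l; rewrite -size_ts -sum_eq.
Qed.
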